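(* Let $g(n,K_3,\emptyset)$ denote the score of the Constructor-Blocker game on $K_n$ in which Constructor has no restriction (no forbidden subgraph) and the score is the number of triangles in Constructor's graph. Then, as $n\to\infty$, $$g(n,K_3,\emptyset)=(1+o(1))\frac{n^3}{48}.$$
   Context: Constructor-Blocker game: given graphs $H$ and $F$ (or a family $\mathcal{F}$, possibly empty), two players, Constructor and Blocker, alternately claim previously unclaimed edges of the complete graph $K_n$, Constructor moving first. Constructor may only claim an edge if her graph (the edges she has claimed) remains $F$-free (contains no subgraph isomorphic to a member of $\mathcal{F}$); Blocker may claim any unclaimed edge. The game ends when Constructor cannot claim any more edges or all edges are claimed. The score is the number of copies of $H$ in Constructor's graph at the end. Constructor maximizes, Blocker minimizes; $g(n,H,\mathcal{F})$ denotes the score under optimal play by both. With $\mathcal{F}=\emptyset$ there is no restriction on Constructor. *)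

From mathcomp Require Import all_boot all_order all_algebra.
Set Implicit Arguments. Unset Strict Implicit. Unset Printing Implicit Defensive.

Section Game.
Variable n : nat.

Definition is_edge (e : {set 'I_n}) : bool := #|e| == 2.

Definition triangles (G : {set {set 'I_n}}) : nat :=
  #|[set T : {set 'I_n} | (#|T| == 3) &&
       [forall e : {set 'I_n}, (is_edge e && (e \subset T)) ==> (e \in G)]]|.

Definition free (C B : {set {set 'I_n}}) : {set {set 'I_n}} :=
  [set e | is_edge e && (e \notin C) && (e \notin B)].

(* A trivial upper bound on any score (triangles are subsets of 'I_n);
   used only as the neutral element of the minimum over Blocker's moves. *)
Definition score_top : nat := #|[set: {set 'I_n}]|.

(* With F empty, Constructor's legal moves are all free edges;
   the game ends when no edge is free. *)
Fixpoint game_val (k : nat) (ct : bool) (C B : {set {set 'I_n}}) : nat :=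
  match k with
  | 0 => triangles C
  | k'.+1 =>
    if free C B == set0 then triangles C
    else if ct then \max_(e in free C B) game_val k' false (e |: C) B
    else \big[minn/score_top]_(e in free C B) game_val k' true C (e |: B)
  end.

End Game.

(* g(n, K_3, emptyset): each move claims a free edge, so 'C(n,2) moves of fuel
   suffice to play the game to its end. *)
Definition g_K3 (n : nat) : nat := @game_val n 'C(n, 2) true set0 set0.

From Pilot Require Import Defs.
From mathcomp Require Import all_boot all_order all_algebra.
From mathcomp Require Import zify ring lra.
Set Implicit Arguments. Unset Strict Implicit. Unset Printing Implicit Defensive.
Import Order.TTheory.

(** Erdős–Selfridge potential argument.  Give a triple of vertices that
    contains no Blocker edge the weight 2^(number of Constructor edges in it),
    and 0 otherwise; the potential is the total weight of all triples.  It
    starts at C(n,3) and ends at 8 times the number of triangles.  Claiming an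
    edge changes the potential by the weight of the edge (the total weight of
    the triples through it): Constructor adds it, Blocker removes it.
    If Blocker always claims a heaviest free edge, the potential never grows
    by more than the largest edge weight, at most 8n; if Constructor always
    claims a heaviest free edge, her claim raises every other edge weight by
    at most 8, so each round loses at most 8.  Hence
    C(n,3) - 4 C(n,2) - 4 <= 8 g(n) <= C(n,3) + 8n. *)

Section Potential.
Variable n : nat.
Local Notation vset := {set 'I_n}.
Local Notation eset := {set {set 'I_n}}.
Implicit Types (C B : eset) (b c e T : vset).

Definition live B T : bool :=
  [forall e, (is_edge e && (e \subset T)) ==> (e \notin B)].

Definition edges_within C T : {set vset} :=
  [set e in C | is_edge e && (e \subset T)].

Definition triple_weight C B T : nat :=
  if live B T then 2 ^ #|edges_within C T| else 0.

Definition potential C B : nat := \sum_(T : vset | #|T| == 3) triple_weight C B T.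

Definition edge_weight C B c : nat :=
  \sum_(T : vset | (#|T| == 3) && (c \subset T)) triple_weight C B T.

Definition max_edge_weight C B : nat :=
  \max_(c in Defs.free C B) edge_weight C B c.

Lemma card_edges_within_setU1 C c T : is_edge c -> c \notin C ->
  #|edges_within (c |: C) T| = #|edges_within C T| + (c \subset T).
Proof.
move=> ec cC; case: (boolP (c \subset T)) => cT.
  have -> : edges_within (c |: C) T = c |: edges_within C T.
    by apply/setP => e; rewrite !inE; case: eqVneq => [->|] //=; rewrite ec cT.
  by rewrite cardsU1 inE (negbTE cC) addnC.
rewrite addn0; apply: eq_card => e; rewrite !inE.
by case: eqVneq => [->|] //=; rewrite (negbTE cT) !andbF.
Qed.

Lemma live_setU1 B b T : is_edge b ->
  live (b |: B) T = live B T && ~~ (b \subset T).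
Proof.
move=> eb; apply/forallP/andP => [live_bB | [/forallP live_B bT] e].
  split; last by apply/negP => bT; have := live_bB b; rewrite eb bT setU11.
  apply/forallP => e; apply/implyP => /[dup] eT /(implyP (live_bB e)).
  by rewrite in_setU1 negb_or => /andP[].
apply/implyP => /[dup] /andP[_ eT] /(implyP (live_B e)) eB.
by rewrite in_setU1 negb_or eB andbT; apply: contraNneq bT => <-.
Qed.

Lemma triple_weight_constructor_claim C B c T : is_edge c -> c \notin C ->
  triple_weight (c |: C) B T = triple_weight C B T * 2 ^ (c \subset T).
Proof.
by move=> ec cC; rewrite /triple_weight card_edges_within_setU1 // expnD; case: ifP.
Qed.

Lemma triple_weight_blocker_claim C B b T : is_edge b ->
  triple_weight C (b |: B) T = if b \subset T then 0 else triple_weight C B T.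
Proof.
by move=> eb; rewrite /triple_weight live_setU1 //; case: (b \subset T); rewrite ?andbF ?andbT.
Qed.

Lemma card_edges_triple T : #|T| == 3 ->
  #|[set e | is_edge e && (e \subset T)]| = 3.
Proof.
move=> /eqP T3; rewrite -[3]/('C(3, 2)) -T3 -cards_draws.
by apply: eq_card => e; rewrite !inE andbC.
Qed.

Lemma triple_weight_le8 C B T : #|T| == 3 -> triple_weight C B T <= 8.
Proof.
move=> T3; rewrite /triple_weight; case: ifP => // _.
rewrite (@leq_pexp2l 2 _ 3) // -(card_edges_triple T3).
by apply/subset_leq_card/subsetP => e; rewrite !inE => /andP[].
Qed.

Lemma potential_constructor_claim C B c : is_edge c -> c \notin C ->
  potential (c |: C) B = potential C B + edge_weight C B c.
Proof.
move=> ec cC; rewrite /potential /edge_weight (bigID (fun T => c \subset T)).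
rewrite [X in _ = X + _](bigID (fun T => c \subset T)) /=.
rewrite addnAC -big_split /=; congr (_ + _).
  by apply: eq_bigr => T /andP[_ cT]; rewrite triple_weight_constructor_claim // cT muln2 addnn.
by apply: eq_bigr => T /andP[_ /negbTE cT]; rewrite triple_weight_constructor_claim // cT muln1.
Qed.

Lemma potential_blocker_claim C B b : is_edge b ->
  potential C (b |: B) + edge_weight C B b = potential C B.
Proof.
move=> eb; rewrite /potential /edge_weight (bigID (fun T => b \subset T)).
rewrite [RHS](bigID (fun T => b \subset T)) /=.
rewrite big1 => [|T /andP[_ bT]]; last by rewrite triple_weight_blocker_claim // bT.
rewrite add0n addnC; congr (_ + _).
by apply: eq_bigr => T /andP[_ /negbTE bT]; rewrite triple_weight_blocker_claim // bT.
Qed.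

Lemma edge_weight_blocker_claim C B b c : is_edge b ->
  edge_weight C (b |: B) c <= edge_weight C B c.
Proof. by move=> eb; apply: leq_sum => T _; rewrite triple_weight_blocker_claim //; case: ifP. Qed.

Lemma triple_through_edges b c T : is_edge b -> is_edge c -> b != c ->
  #|T| == 3 -> b \subset T -> c \subset T -> T = b :|: c.
Proof.
move=> /eqP b2 /eqP c2 bc /eqP T3 bT cT; apply/eqP; rewrite eq_sym eqEcard subUset bT cT T3.
rewrite cardsU b2 c2 /=; set k := #|_ :&: _|; suff : k <= 1 by move=> ?; lia.
rewrite /k leqNgt; apply: contra bc => bc2.
have /eqP <- : b :&: c == b by rewrite eqEcard subsetIl b2.
by rewrite eqEcard subsetIr c2.
Qed.

Lemma edge_weight_constructor_claim C B b c : is_edge b -> is_edge c -> b != c ->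
  c \notin C -> edge_weight (c |: C) B b <= edge_weight C B b + 8.
Proof.
move=> eb ec bc cC; rewrite /edge_weight.
rewrite (bigID (fun T => c \subset T)) [X in _ <= X + _](bigID (fun T => c \subset T)) /=.
set through_c := fun T : vset => (#|T| == 3) && (b \subset T) && (c \subset T).
set avoid_c := fun T : vset => (#|T| == 3) && (b \subset T) && ~~ (c \subset T).
have -> : \sum_(T | through_c T) triple_weight (c |: C) B T
    = 2 * \sum_(T | through_c T) triple_weight C B T.
  rewrite big_distrr; apply: eq_bigr => T /andP[_ cT].
  by rewrite triple_weight_constructor_claim // cT mulnC.
have -> : \sum_(T | avoid_c T) triple_weight (c |: C) B T
    = \sum_(T | avoid_c T) triple_weight C B T.
  by apply: eq_bigr => T /andP[_ /negbTE cT]; rewrite triple_weight_constructor_claim // cT muln1.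
rewrite mul2n -addnn -!addnA leq_add2l addnC leq_add2l.
rewrite big_mkcond (bigD1 (b :|: c)) //= big1 ?addn0 => [|T Tbc].
  by case: ifP => // /andP[/andP[T3 _] _]; apply: triple_weight_le8.
case: ifP => // /andP[/andP[T3 bT] cT].
by rewrite (triple_through_edges eb ec bc T3 bT cT) eqxx in Tbc.
Qed.

Lemma edge_weight_le C B c : is_edge c -> edge_weight C B c <= 8 * n.
Proof.
move=> /eqP c2; rewrite /edge_weight.
apply: (@leq_trans (\sum_(T : vset | (#|T| == 3) && (c \subset T)) 8)).
  by apply: leq_sum => T /andP[T3 _]; apply: triple_weight_le8.
rewrite sum_nat_const mulnC leq_mul2l /=.
apply: (@leq_trans #|[set c :|: [set x] | x : 'I_n]|); last first.
  by rewrite (leq_trans (leq_imset_card _ _)) ?card_ord.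
apply/subset_leq_card/subsetP => T; rewrite unfold_in /= => /andP[/eqP T3 cT].
have /cards1P [x Tc] : #|T :\: c| == 1 by rewrite cardsD (setIidPr cT) T3 c2.
by apply/imsetP; exists x => //; rewrite -Tc -{1}(setID T c) (setIidPr cT).
Qed.

Lemma potential0 : potential set0 set0 = 'C(n, 3).
Proof.
rewrite /potential -[n in 'C(n, 3)]card_ord -card_draws -sum1_card.
apply: eq_big => [T|T _]; first by rewrite inE.
rewrite /triple_weight (_ : live set0 T); last by apply/forallP => e; rewrite inE implybT.
rewrite (_ : edges_within set0 T = set0) ?cards0 //.
by apply/setP => e; rewrite !inE.
Qed.

Lemma triangles_le_potential C B : [disjoint C & B] ->
  8 * triangles C <= potential C B.
Proof.
move=> dCB; rewrite /triangles mulnC -sum_nat_const /potential.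
rewrite big_mkcond [leqRHS]big_mkcond /=; apply: leq_sum => T _.
rewrite inE; case: ifP => //= /andP[T3 /forallP T_in_C]; rewrite T3.
have live_T : live B T.
  apply/forallP => e; apply/implyP => /(implyP (T_in_C e)).
  by move=> eC; rewrite (disjointFr dCB eC).
have all_in_C : edges_within C T = [set e | is_edge e && (e \subset T)].
  apply/setP => e; rewrite !inE andbC.
  by case He: (is_edge e && _); rewrite ?(implyP (T_in_C e) He).
by rewrite /triple_weight live_T all_in_C (card_edges_triple T3).
Qed.

Lemma potential_le_triangles C B : Defs.free C B = set0 ->
  potential C B <= 8 * triangles C.
Proof.
move=> free0; rewrite /triangles mulnC -sum_nat_const /potential.
rewrite big_mkcond [leqRHS]big_mkcond /=; apply: leq_sum => T _.
case: ifP => // T3; rewrite /triple_weight; case: ifP => // /forallP live_T.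
have -> : T \in [set T : vset | (#|T| == 3) &&
    [forall e, (is_edge e && (e \subset T)) ==> (e \in C)]].
  rewrite inE T3; apply/forallP => e; apply/implyP => /[dup] He /(implyP (live_T e)) eB.
  apply/negPn/negP => eC.
  by have := in_set0 e; rewrite -free0 inE -andbA (andP He).1 eC eB.
rewrite (@leq_pexp2l 2 _ 3) // -(card_edges_triple T3).
by apply/subset_leq_card/subsetP => e; rewrite !inE => /andP[].
Qed.

Lemma potential_le_score_top C B : potential C B <= 8 * score_top n.
Proof.
rewrite /potential /score_top cardsT mulnC -sum_nat_const big_mkcond /=.
by apply: leq_sum => T _; case: ifP => // /triple_weight_le8.
Qed.

Lemma in_free C B e :
  (e \in Defs.free C B) = [&& is_edge e, e \notin C & e \notin B].
Proof. by rewrite inE andbA. Qed.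

Lemma free_constructor_claim C B c : Defs.free (c |: C) B = Defs.free C B :\ c.
Proof.
by apply/setP => e; rewrite !inE; case: eqVneq => [->|] //=; rewrite !andbF.
Qed.

Lemma free_blocker_claim C B b : Defs.free C (b |: B) = Defs.free C B :\ b.
Proof.
by apply/setP => e; rewrite !inE; case: eqVneq => [->|] //=; rewrite !andbF.
Qed.

Lemma max_edge_weight_blocker_claim C B b : is_edge b ->
  max_edge_weight C (b |: B) <= max_edge_weight C B.
Proof.
move=> eb; apply/bigmax_leqP => c; rewrite free_blocker_claim => /setD1P[_ cF].
exact: leq_trans (edge_weight_blocker_claim _ _ _ eb) (leq_bigmax_cond _ cF).
Qed.

Lemma max_edge_weight_constructor_claim C B c : c \in Defs.free C B ->
  max_edge_weight (c |: C) B <= max_edge_weight C B + 8.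
Proof.
rewrite in_free => /and3P[ec cC _]; apply/bigmax_leqP => b.
rewrite free_constructor_claim => /setD1P[bc bF].
have /and3P[eb _ _] : [&& is_edge b, b \notin C & b \notin B] by rewrite -in_free.
apply: leq_trans (edge_weight_constructor_claim _ eb ec bc cC) _.
by rewrite leq_add2r (leq_bigmax_cond _ bF).
Qed.

Lemma game_val_end k ct C B : Defs.free C B = set0 -> game_val k ct C B = triangles C.
Proof. by case: k => //= k ->; rewrite eqxx. Qed.

Lemma game_val_upper k C B : [disjoint C & B] ->
  8 * game_val k false C B <= potential C B /\
  8 * game_val k true C B <= potential C B + max_edge_weight C B.
Proof.
elim: k C B => [|k IH] C B dCB /=.
  by have := triangles_le_potential dCB; lia.
case: eqP => [_|/eqP free_ne]; first by have := triangles_le_potential dCB; lia.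
have free_gt0 : 0 < #|Defs.free C B| by rewrite card_gt0.
split.
  (* Blocker's strategy: claim a heaviest free edge. *)
  have [b bF] := eq_bigmax_cond (edge_weight C B) free_gt0.
  rewrite -/(max_edge_weight C B) => wb.
  have /and3P[eb bC _] : [&& is_edge b, b \notin C & b \notin B] by rewrite -in_free.
  have dCbB : [disjoint C & b |: B].
    rewrite disjoint_sym disjoints_subset subUset sub1set inE bC /=.
    by rewrite -disjoints_subset disjoint_sym.
  have [_ IHb] := IH C (b |: B) dCbB.
  apply: leq_trans (_ : 8 * game_val k true C (b |: B) <= _).
    by rewrite leq_mul2l -minEnat; apply/orP; right; apply: (bigmin_le_cond (T := nat)).
  apply: leq_trans IHb _.
  by rewrite -(potential_blocker_claim C B eb) -wb leq_add2l max_edge_weight_blocker_claim.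
have [c cF ->] := eq_bigmax_cond (fun c => game_val k false (c |: C) B) free_gt0.
have /and3P[ec cC cB] : [&& is_edge c, c \notin C & c \notin B] by rewrite -in_free.
have dcCB : [disjoint c |: C & B].
  by rewrite disjoints_subset subUset sub1set inE cB -disjoints_subset.
have [IHc _] := IH (c |: C) B dcCB.
by rewrite (leq_trans IHc) // potential_constructor_claim // leq_add2l (leq_bigmax_cond _ cF).
Qed.

Lemma game_val_lower k C B : #|Defs.free C B| <= k ->
  potential C B <= 8 * game_val k true C B + 4 * #|Defs.free C B| + 4 /\
  potential C B <= 8 * game_val k false C B + max_edge_weight C B + 4 * #|Defs.free C B|.
Proof.
elim: k C B => [|k IH] C B Fk.
  have free0 : Defs.free C B = set0 by apply/eqP; rewrite -cards_eq0 -leqn0.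
  by rewrite !game_val_end //; have := potential_le_triangles free0; lia.
case: (eqVneq (Defs.free C B) set0) => [free0|free_ne].
  by rewrite !game_val_end //; have := potential_le_triangles free0; lia.
have free_gt0 : 0 < #|Defs.free C B| by rewrite card_gt0.
rewrite /= (negbTE free_ne); split.
  (* Constructor's strategy: claim a heaviest free edge. *)
  have [c cF] := eq_bigmax_cond (edge_weight C B) free_gt0.
  rewrite -/(max_edge_weight C B) => wc.
  have /and3P[ec cC _] : [&& is_edge c, c \notin C & c \notin B] by rewrite -in_free.
  have Fc : #|Defs.free (c |: C) B| = #|Defs.free C B| - 1.
    by rewrite free_constructor_claim (cardsD1 c (Defs.free C B)) cF add1n subn1.
  have /IH[_ IHc] : #|Defs.free (c |: C) B| <= k by lia.
  apply: leq_trans (_ : _ <= 8 * game_val k false (c |: C) B + 4 * #|Defs.free C B| + 4) _.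
    have := potential_constructor_claim B ec cC.
    by have := max_edge_weight_constructor_claim cF; lia.
  by rewrite !leq_add2r leq_mul2l (leq_bigmax_cond _ cF) orbT.
elim/big_ind: _ => [|x y|b bF].
- by have := potential_le_score_top C B; lia.
- by rewrite /minn; case: ifP.
have /and3P[eb _ _] : [&& is_edge b, b \notin C & b \notin B] by rewrite -in_free.
have Fb : #|Defs.free C (b |: B)| = #|Defs.free C B| - 1.
  by rewrite free_blocker_claim (cardsD1 b (Defs.free C B)) bF add1n subn1.
have /IH[IHb _] : #|Defs.free C (b |: B)| <= k by lia.
rewrite -(potential_blocker_claim C B eb) addnAC; apply: leq_add; last exact: leq_bigmax_cond.
by apply: leq_trans IHb _; rewrite -addnA leq_add2l Fb mulnBr muln1 subnK // leq_pmulr.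
Qed.

End Potential.

Lemma card_free0 n : #|Defs.free (set0 : {set {set 'I_n}}) set0| = 'C(n, 2).
Proof.
rewrite -[n in 'C(n, 2)]card_ord -card_draws.
by apply: eq_card => e; rewrite !inE /is_edge !andbT.
Qed.

Lemma g_K3_upper n : 8 * g_K3 n <= 'C(n, 3) + 8 * n.
Proof.
have disj0 : [disjoint (set0 : {set {set 'I_n}}) & set0].
  by rewrite disjoints_subset sub0set.
have [_ /leq_trans -> //] := game_val_upper 'C(n, 2) disj0.
rewrite potential0 leq_add2l; apply/bigmax_leqP => c.
by rewrite in_free => /and3P[ec _ _]; apply: edge_weight_le.
Qed.

Lemma g_K3_lower n : 'C(n, 3) <= 8 * g_K3 n + 4 * 'C(n, 2) + 4.
Proof.
have [] := @game_val_lower n 'C(n, 2) set0 set0 (eq_leq (card_free0 n)).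
by rewrite potential0 card_free0.
Qed.

Lemma g_K3_cubic_bounds n :
  48 * g_K3 n <= n ^ 3 + 50 * n ^ 2 /\ n ^ 3 <= 48 * g_K3 n + 50 * n ^ 2.
Proof.
have bin3 : 'C(n, 3) * 6 = n * n.-1 * n.-2.
  by rewrite -[6]/(3`!) bin_ffact !ffactnS ffactn0 muln1 mulnA.
have bin2 : 'C(n, 2) * 2 = n * n.-1.
  by rewrite -[2]/(2`!) bin_ffact !ffactnS ffactn0 muln1.
have := g_K3_upper n; have := g_K3_lower n; move: (g_K3 n) => g lo up.
by split; [clear lo bin2 | clear up]; nia.
Qed.

Import GRing.Theory Num.Theory.
Local Open Scope ring_scope.

Lemma relative_error_le (R : realFieldType) (a x c : R) : 0 < x ->
  a <= x ^+ 3 + c * x ^+ 2 -> x ^+ 3 <= a + c * x ^+ 2 ->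
  `|a / x ^+ 3 - 1| <= c / x.
Proof.
move=> x_gt0 a_le a_ge; have x3_gt0 : 0 < x ^+ 3 by rewrite exprn_gt0.
have -> : a / x ^+ 3 - 1 = (a - x ^+ 3) / x ^+ 3 by field; rewrite gt_eqF.
have -> : c / x = (c * x ^+ 2) / x ^+ 3 by field; rewrite gt_eqF.
rewrite normrM [`|x ^- 3|]gtr0_norm ?invr_gt0 // ler_pM2r ?invr_gt0 //.
by rewrite ler_norml; apply/andP; split; lra.
Qed.

Theorem theorem1p1 :
  forall eps : rat, 0 < eps ->
  exists N : nat, forall n : nat, (N <= n)%N ->
    `| (g_K3 n)%:R / ((n%:R) ^+ 3 / 48) - 1 | < eps.
Proof.
move=> eps eps_gt0; exists (maxn 1 (Num.Def.archi_bound (50 / eps))) => n.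
rewrite geq_max => /andP[n_gt0 n_large].
have x_gt0 : 0 < n%:R :> rat by rewrite ltr0n.
have [up lo] := g_K3_cubic_bounds n; move: (g_K3 n) up lo => g up lo.
have -> : g%:R / (n%:R ^+ 3 / 48) = (48 * g)%:R / n%:R ^+ 3 :> rat.
  by rewrite natrM; field; rewrite gt_eqF ?exprn_gt0.
apply: le_lt_trans (relative_error_le (c := 50) x_gt0 _ _) _.
- by rewrite -!natrX -natrM -natrD ler_nat.
- by rewrite -!natrX -natrM -natrD ler_nat.
rewrite (ltr_pdivrMr _ _ x_gt0) mulrC -(ltr_pdivrMr _ _ eps_gt0).
apply: lt_le_trans (archi_boundP _) _; first by rewrite divr_ge0 // ltW.
by rewrite ler_nat.
Qed.
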